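(* Let $L>0$ and let $s\mapsto A(s)$, $s\in\mathbb{R}$, be an $L$-periodic $C^1$ family of complex symmetric $2\times 2$ matrices such that for every $s$, $A(s)A(s)^\dagger$ has eigenvalues $\lambda_1(s)^2>\lambda_2(s)^2>0$ ($\lambda_j>0$). Let $\mathbf{u}_1(s),\mathbf{u}_2(s)$ be $C^1$, $L$-periodic, orthonormal eigenvectors with $A A^\dagger\mathbf{u}_j=\lambda_j^2\mathbf{u}_j$, let $\tilde\lambda_j(s)=\mathbf{u}_j(s)^TA(s)^\dagger\mathbf{u}_j(s)$, and let $\gamma_j:\mathbb{R}\to\mathbb{R}$ be a $C^1$ function with $\tilde\lambda_j=\lambda_j e^{i\gamma_j}$. Define $\psi_{j,\pm}(s)=\frac{1}{\sqrt2}\begin{pmatrix}\pm e^{-i\gamma_j(s)}\mathbf{u}_j(s)\\ \overline{\mathbf{u}_j(s)}\end{pmatrix}$ and the Zak phase $\mathcal{Z}_j=i\int_0^L\langle\psi_{j,\pm}(s),\partial_s\psi_{j,\pm}(s)\rangle\,ds$ (inner product antilinear in the first slot). Then, for either choice of sign, $$\mathcal{Z}_j=\frac{\gamma_j(L)-\gamma_j(0)}{2}=\pi\,W(\tilde\lambda_j),$$ where $W(\tilde\lambda_j)\in\mathbb{Z}$ is the winding number about $0$ of the closed curve $s\mapsto\tilde\lambda_j(s)$, $s\in[0,L]$.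
   Context: $\overline{\cdot}$ denotes complex conjugation, $^T$ transpose, $^\dagger$ conjugate transpose. The winding number of a nonvanishing continuous $L$-periodic function $f:\mathbb{R}\to\mathbb{C}\setminus\{0\}$ is $(\arg f(L)-\arg f(0))/(2\pi)$ for a continuous branch of $\arg f$. *)

From Stdlib Require Import Reals ZArith.
Open Scope R_scope.

Definition C : Type := (R * R)%type.
Definition Cre (z : C) : R := fst z.
Definition Cim (z : C) : R := snd z.
Definition RtoC (x : R) : C := (x, 0).
Definition Cadd (z w : C) : C := (Cre z + Cre w, Cim z + Cim w).
Definition Cmul (z w : C) : C :=
  (Cre z * Cre w - Cim z * Cim w, Cre z * Cim w + Cim z * Cre w).
Definition Cconj (z : C) : C := (Cre z, - Cim z).
Definition Cnorm (z : C) : R := sqrt (Cre z * Cre z + Cim z * Cim z).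
Definition Cexpi (t : R) : C := (cos t, sin t).

(** Vectors in C^2 and 2x2 complex matrices (given by rows). *)
Definition V2 : Type := (C * C)%type.
Definition M2 : Type := (V2 * V2)%type.
Definition v1 (v : V2) : C := fst v.
Definition v2 (v : V2) : C := snd v.
Definition m11 (M : M2) : C := fst (fst M).
Definition m12 (M : M2) : C := snd (fst M).
Definition m21 (M : M2) : C := fst (snd M).
Definition m22 (M : M2) : C := snd (snd M).
Definition mk2 (a b c d : C) : M2 := ((a, b), (c, d)).

Definition mtrans (M : M2) : M2 := mk2 (m11 M) (m21 M) (m12 M) (m22 M).
Definition mconj (M : M2) : M2 :=
  mk2 (Cconj (m11 M)) (Cconj (m12 M)) (Cconj (m21 M)) (Cconj (m22 M)).
Definition madj (M : M2) : M2 := mconj (mtrans M).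
Definition mmul (M N : M2) : M2 :=
  mk2 (Cadd (Cmul (m11 M) (m11 N)) (Cmul (m12 M) (m21 N)))
      (Cadd (Cmul (m11 M) (m12 N)) (Cmul (m12 M) (m22 N)))
      (Cadd (Cmul (m21 M) (m11 N)) (Cmul (m22 M) (m21 N)))
      (Cadd (Cmul (m21 M) (m12 N)) (Cmul (m22 M) (m22 N))).
Definition mvec (M : M2) (v : V2) : V2 :=
  (Cadd (Cmul (m11 M) (v1 v)) (Cmul (m12 M) (v2 v)),
   Cadd (Cmul (m21 M) (v1 v)) (Cmul (m22 M) (v2 v))).
Definition vscale (c : C) (v : V2) : V2 := (Cmul c (v1 v), Cmul c (v2 v)).
Definition vconj (v : V2) : V2 := (Cconj (v1 v), Cconj (v2 v)).
(** bilinear product u^T w (no conjugation) *)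
Definition bil2 (u w : V2) : C := Cadd (Cmul (v1 u) (v1 w)) (Cmul (v2 u) (v2 w)).
Definition inner2 (u w : V2) : C := bil2 (vconj u) w.

Definition V4 : Type := (V2 * V2)%type.
Definition inner4 (p q : V4) : C := Cadd (inner2 (fst p) (fst q)) (inner2 (snd p) (snd q)).

Definition has_cderiv (f : R -> C) (s : R) (d : C) : Prop :=
  derivable_pt_lim (fun t => Cre (f t)) s (Cre d) /\
  derivable_pt_lim (fun t => Cim (f t)) s (Cim d).

Definition C1R (f : R -> R) : Prop :=
  exists df : R -> R, (forall s, derivable_pt_lim f s (df s)) /\ continuity df.
Definition C1C (f : R -> C) : Prop :=
  C1R (fun t => Cre (f t)) /\ C1R (fun t => Cim (f t)).
Definition C1V2 (f : R -> V2) : Prop :=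
  C1C (fun t => v1 (f t)) /\ C1C (fun t => v2 (f t)).
Definition C1M2 (f : R -> M2) : Prop :=
  C1C (fun t => m11 (f t)) /\ C1C (fun t => m12 (f t)) /\
  C1C (fun t => m21 (f t)) /\ C1C (fun t => m22 (f t)).

Definition has_deriv4 (p : R -> V4) (s : R) (d : V4) : Prop :=
  has_cderiv (fun t => v1 (fst (p t))) s (v1 (fst d)) /\
  has_cderiv (fun t => v2 (fst (p t))) s (v2 (fst d)) /\
  has_cderiv (fun t => v1 (snd (p t))) s (v1 (snd d)) /\
  has_cderiv (fun t => v2 (snd (p t))) s (v2 (snd d)).

(** Derivatives
    and Riemann integrals are unique, so this determines z. *)
Definition zak_phase (psi : R -> V4) (L : R) (z : C) : Prop :=
  exists dpsi : R -> V4,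
    (forall s, has_deriv4 psi s (dpsi s)) /\
    exists (pr_re : Riemann_integrable (fun s => Cre (inner4 (psi s) (dpsi s))) 0 L)
           (pr_im : Riemann_integrable (fun s => Cim (inner4 (psi s) (dpsi s))) 0 L),
      z = Cmul (0, 1) (RiemannInt pr_re, RiemannInt pr_im).

Definition is_arg_branch (f : R -> C) (th : R -> R) : Prop :=
  continuity th /\ forall s, f s = Cmul (RtoC (Cnorm (f s))) (Cexpi (th s)).
Definition winding_number (f : R -> C) (L : R) (w : R) : Prop :=
  (forall s, f s <> (0, 0)) /\
  exists th : R -> R, is_arg_branch f th /\ w = (th L - th 0) / (2 * PI).

Definition psi_state (sign : bool) (gam : R -> R) (u : R -> V2) (s : R) : V4 :=
  let c := RtoC (/ sqrt 2) in
  let sg := if sign then RtoC 1 else RtoC (-1) in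
  (vscale (Cmul c (Cmul sg (Cexpi (- gam s)))) (u s),
   vscale c (vconj (u s))).

From Pilot Require Import Defs.
From Stdlib Require Import Reals ZArith Lra Lia Psatz FunctionalExtensionality.
Open Scope R_scope.

(* Writing [psi = (a u, c conj u)] with [|a|^2 = |c|^2 = 1/2], the terms of
   [<psi, psi'>] involving [u'] add up to [(<u,u'> + conj <u,u'>)/2 = Re <u,u'>],
   which vanishes because [|u| = 1]; only the phase [a = ± e^{-i gamma}/sqrt 2]
   contributes, namely [conj a * a' = -i gamma'/2], so the Zak phase is
   [(gamma L - gamma 0)/2].  For the winding number, [gamma] is a continuous
   argument of [lt], any two continuous arguments of a nonvanishing curve differ
   by a continuous [2 PI Z]-valued, hence constant, function, and periodicity of
   [A] and [u] makes [gamma L - gamma 0] a multiple of [2 PI]. *)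

Definition vadd (u w : V2) : V2 := (Cadd (v1 u) (v1 w), Cadd (v2 u) (v2 w)).

Definition has_vderiv (u : R -> V2) (s : R) (du : V2) : Prop :=
  has_cderiv (fun t => v1 (u t)) s (v1 du) /\ has_cderiv (fun t => v2 (u t)) s (v2 du).

Lemma derivable_pt_lim_eq (f : R -> R) (x l l' : R) :
  derivable_pt_lim f x l -> l = l' -> derivable_pt_lim f x l'.
Proof. intros H ->; exact H. Qed.

Lemma has_cderiv_eq (f : R -> Defs.C) (s : R) (d d' : Defs.C) :
  has_cderiv f s d -> d = d' -> has_cderiv f s d'.
Proof. intros H ->; exact H. Qed.

Lemma has_cderiv_const (c : Defs.C) (s : R) : has_cderiv (fun _ => c) s (0, 0).
Proof. split; apply derivable_pt_lim_const. Qed.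

Lemma has_cderiv_add (f g : R -> Defs.C) (s : R) (df dg : Defs.C) :
  has_cderiv f s df -> has_cderiv g s dg ->
  has_cderiv (fun t => Cadd (f t) (g t)) s (Cadd df dg).
Proof.
  intros [Hf1 Hf2] [Hg1 Hg2]; split.
  - exact (derivable_pt_lim_plus _ _ _ _ _ Hf1 Hg1).
  - exact (derivable_pt_lim_plus _ _ _ _ _ Hf2 Hg2).
Qed.

Lemma has_cderiv_mul (f g : R -> Defs.C) (s : R) (df dg : Defs.C) :
  has_cderiv f s df -> has_cderiv g s dg ->
  has_cderiv (fun t => Cmul (f t) (g t)) s (Cadd (Cmul df (g s)) (Cmul (f s) dg)).
Proof.
  intros [Hf1 Hf2] [Hg1 Hg2]; split.
  - eapply derivable_pt_lim_eq.
    + exact (derivable_pt_lim_minus _ _ _ _ _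
               (derivable_pt_lim_mult _ _ _ _ _ Hf1 Hg1)
               (derivable_pt_lim_mult _ _ _ _ _ Hf2 Hg2)).
    + unfold Cadd, Cmul, Cre, Cim; simpl; ring.
  - eapply derivable_pt_lim_eq.
    + exact (derivable_pt_lim_plus _ _ _ _ _
               (derivable_pt_lim_mult _ _ _ _ _ Hf1 Hg2)
               (derivable_pt_lim_mult _ _ _ _ _ Hf2 Hg1)).
    + unfold Cadd, Cmul, Cre, Cim; simpl; ring.
Qed.

Lemma has_cderiv_scal (k : Defs.C) (f : R -> Defs.C) (s : R) (df : Defs.C) :
  has_cderiv f s df -> has_cderiv (fun t => Cmul k (f t)) s (Cmul k df).
Proof.
  intro Hf. eapply has_cderiv_eq.
  - exact (has_cderiv_mul _ _ _ _ _ (has_cderiv_const k s) Hf).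
  - unfold Cadd, Cmul, Cre, Cim; simpl; f_equal; ring.
Qed.

Lemma has_cderiv_conj (f : R -> Defs.C) (s : R) (df : Defs.C) :
  has_cderiv f s df -> has_cderiv (fun t => Cconj (f t)) s (Cconj df).
Proof. intros [H1 H2]; split; [exact H1 | exact (derivable_pt_lim_opp _ _ _ H2)]. Qed.

Lemma has_cderiv_Cexpi (h : R -> R) (s dh : R) :
  derivable_pt_lim h s dh ->
  has_cderiv (fun t => Cexpi (h t)) s (Cmul (0, dh) (Cexpi (h s))).
Proof.
  intro H; split.
  - eapply derivable_pt_lim_eq.
    + exact (derivable_pt_lim_comp _ _ _ _ _ H (derivable_pt_lim_cos _)).
    + unfold Cmul, Cre, Cim; simpl; ring.
  - eapply derivable_pt_lim_eq.
    + exact (derivable_pt_lim_comp _ _ _ _ _ H (derivable_pt_lim_sin _)).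
    + unfold Cmul, Cre, Cim; simpl; ring.
Qed.

Lemma has_vderiv_scale (a : R -> Defs.C) (u : R -> V2) (s : R) (da : Defs.C) (du : V2) :
  has_cderiv a s da -> has_vderiv u s du ->
  has_vderiv (fun t => vscale (a t) (u t)) s (vadd (vscale da (u s)) (vscale (a s) du)).
Proof.
  intros Ha [Hu1 Hu2]; split.
  - exact (has_cderiv_mul _ _ _ _ _ Ha Hu1).
  - exact (has_cderiv_mul _ _ _ _ _ Ha Hu2).
Qed.

Lemma has_vderiv_scale_const (c : Defs.C) (u : R -> V2) (s : R) (du : V2) :
  has_vderiv u s du -> has_vderiv (fun t => vscale c (u t)) s (vscale c du).
Proof. intros [Hu1 Hu2]; split; apply has_cderiv_scal; assumption. Qed.

Lemma has_vderiv_conj (u : R -> V2) (s : R) (du : V2) :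
  has_vderiv u s du -> has_vderiv (fun t => vconj (u t)) s (vconj du).
Proof. intros [Hu1 Hu2]; split; apply has_cderiv_conj; assumption. Qed.

Lemma has_cderiv_inner2 (u w : R -> V2) (s : R) (du dw : V2) :
  has_vderiv u s du -> has_vderiv w s dw ->
  has_cderiv (fun t => inner2 (u t) (w t)) s (Cadd (inner2 du (w s)) (inner2 (u s) dw)).
Proof.
  intros [Hu1 Hu2] [Hw1 Hw2]. eapply has_cderiv_eq.
  - apply has_cderiv_add; apply has_cderiv_mul; try apply has_cderiv_conj; eassumption.
  - unfold inner2, bil2, vconj, Cadd, Cmul, Cconj, Cre, Cim; simpl; f_equal; ring.
Qed.

Lemma Cre_inner2_deriv_unit (u : R -> V2) (s : R) (du : V2) :
  (forall t, inner2 (u t) (u t) = RtoC 1) -> has_vderiv u s du ->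
  Cre (inner2 (u s) du) = 0.
Proof.
  intros Hn Hu.
  destruct (has_cderiv_inner2 u u s du du Hu Hu) as [Hre _].
  apply (derivable_pt_lim_ext _ (fct_cte 1)) in Hre; [| intro t; now rewrite Hn].
  pose proof (uniqueness_limite _ _ _ _ Hre (derivable_pt_lim_const 1 s)) as H0.
  revert H0; unfold inner2, bil2, vconj, Cadd, Cmul, Cconj, Cre, Cim; simpl; lra.
Qed.

Lemma C1C_has_cderiv (f : R -> Defs.C) :
  C1C f -> exists df : R -> Defs.C, forall s, has_cderiv f s (df s).
Proof.
  intros [[dre [Hre _]] [dim [Him _]]].
  exists (fun s => (dre s, dim s)); intro s; split; [apply Hre | apply Him].
Qed.

Lemma C1V2_has_vderiv (u : R -> V2) :
  C1V2 u -> exists du : R -> V2, forall s, has_vderiv u s (du s).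
Proof.
  intros [H1 H2].
  destruct (C1C_has_cderiv _ H1) as [d1 Hd1], (C1C_has_cderiv _ H2) as [d2 Hd2].
  exists (fun s => (d1 s, d2 s)); intro s; split; [apply Hd1 | apply Hd2].
Qed.

Lemma has_deriv4_of_blocks (p : R -> V4) (s : R) (d : V4) :
  has_vderiv (fun t => fst (p t)) s (fst d) -> has_vderiv (fun t => snd (p t)) s (snd d) ->
  has_deriv4 p s d.
Proof. intros [H1 H2] [H3 H4]; exact (conj H1 (conj H2 (conj H3 H4))). Qed.

Lemma RiemannInt_of_derivative (f df : R -> R) (a b : R) :
  (forall x, derivable_pt_lim f x (df x)) -> continuity df ->
  exists pr : Riemann_integrable df a b, RiemannInt pr = f b - f a.
Proof.
  intros Hd Hc.
  set (F := @mkC1 f (fun x => exist _ (df x) (Hd x)) Hc).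
  exists (RiemannInt_P32 F a b); exact (FTC_Riemann F _).
Qed.

Lemma zak_phase_of_integrand (psi dpsi : R -> V4) (g dg : R -> R) (L : R) :
  (forall s, has_deriv4 psi s (dpsi s)) ->
  (forall s, derivable_pt_lim g s (dg s)) -> continuity dg ->
  (forall s, inner4 (psi s) (dpsi s) = (0, - dg s / 2)) ->
  zak_phase psi L (RtoC ((g L - g 0) / 2)).
Proof.
  intros Hpsi Hg Hdg Hint.
  exists dpsi; split; [exact Hpsi |].
  replace (fun s => Cre (inner4 (psi s) (dpsi s))) with (fct_cte 0)
    by (apply functional_extensionality; intro s; now rewrite Hint).
  replace (fun s => Cim (inner4 (psi s) (dpsi s))) with (fun s => - dg s / 2)
    by (apply functional_extensionality; intro s; now rewrite Hint).
  assert (Hh : forall s, derivable_pt_lim (fun t => - g t / 2) s (- dg s / 2)).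
  { intro s. eapply derivable_pt_lim_eq.
    - apply (derivable_pt_lim_ext (mult_real_fct (- / 2) g)).
      + intro t; unfold mult_real_fct; field.
      + exact (derivable_pt_lim_scal _ _ _ _ (Hg s)).
    - field. }
  assert (Hdh : continuity (fun s => - dg s / 2)).
  { apply continuity_mult; [exact (continuity_opp _ Hdg) | apply continuity_const; now intros ? ?]. }
  destruct (RiemannInt_of_derivative _ _ 0 L Hh Hdh) as [pr_im Him].
  exists (RiemannInt_P14 0 L 0), pr_im.
  rewrite RiemannInt_P15, Him; unfold RtoC, Cmul, Cre, Cim; simpl; f_equal; field.
Qed.

Lemma inner4_psi_deriv (a c : Defs.C) (x : R) (u du : V2) :
  Cre a * Cre a + Cim a * Cim a = / 2 -> Cre c * Cre c + Cim c * Cim c = / 2 ->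
  Cre (inner2 u u) = 1 -> Cre (inner2 u du) = 0 ->
  inner4 (vscale a u, vscale c (vconj u))
         (vadd (vscale (Cmul a (0, x)) u) (vscale a du),
          vscale c (vconj du)) = (0, x / 2).
Proof.
  destruct a as [ar ai], c as [cr ci], u as [[x1 y1] [x2 y2]], du as [[dx1 dy1] [dx2 dy2]].
  unfold inner4, inner2, bil2, vadd, vconj, vscale, Cadd, Cmul, Cconj, Cre, Cim, v1, v2; simpl.
  intros Ha Hc Hu Hdu; f_equal.
  - transitivity ((ar * ar + ai * ai + (cr * cr + ci * ci))
                  * (x1 * dx1 - - y1 * dy1 + (x2 * dx2 - - y2 * dy2))); [ring |].
    rewrite Hdu; ring.
  - transitivity ((ar * ar + ai * ai) * x * (x1 * x1 - - y1 * y1 + (x2 * x2 - - y2 * y2))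
                  + ((ar * ar + ai * ai) - (cr * cr + ci * ci))
                    * (x1 * dy1 - y1 * dx1 + (x2 * dy2 - y2 * dx2))); [ring |].
    rewrite Hu, Ha, Hc; field.
Qed.

Lemma inv_sqrt2_sq : / sqrt 2 * / sqrt 2 = / 2.
Proof. rewrite <- Rinv_mult, sqrt_sqrt; lra. Qed.

Lemma psi_coef_normsq (sign : bool) (t : R) :
  let a := Cmul (RtoC (/ sqrt 2)) (Cmul (if sign then RtoC 1 else RtoC (-1)) (Cexpi t)) in
  Cre a * Cre a + Cim a * Cim a = / 2.
Proof.
  pose proof (sin2_cos2 t) as Hsc; unfold Rsqr in Hsc.
  rewrite <- inv_sqrt2_sq.
  destruct sign; unfold Cmul, RtoC, Cexpi, Cre, Cim; simpl;
    transitivity (/ sqrt 2 * / sqrt 2 * (sin t * sin t + cos t * cos t));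
    try ring; rewrite Hsc; ring.
Qed.

Lemma zak_phase_psi_state (sign : bool) (g : R -> R) (u : R -> V2) (L : R) :
  C1R g -> C1V2 u -> (forall s, inner2 (u s) (u s) = RtoC 1) ->
  zak_phase (psi_state sign g u) L (RtoC ((g L - g 0) / 2)).
Proof.
  intros [dg [Hg Hdg]] Hu Hn.
  destruct (C1V2_has_vderiv u Hu) as [du Hdu].
  set (c := RtoC (/ sqrt 2)).
  set (a := fun t => Cmul c (Cmul (if sign then RtoC 1 else RtoC (-1)) (Cexpi (- g t)))).
  assert (Ha : forall s, has_cderiv a s (Cmul (a s) (0, - dg s))).
  { intro s. eapply has_cderiv_eq.
    - apply has_cderiv_scal, has_cderiv_scal, has_cderiv_Cexpi, derivable_pt_lim_opp, Hg.
    - unfold a, Cmul, Cre, Cim; simpl; f_equal; ring. }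
  apply (zak_phase_of_integrand _
           (fun s => (vadd (vscale (Cmul (a s) (0, - dg s)) (u s)) (vscale (a s) (du s)),
                      vscale c (vconj (du s))))
           g dg L); [| exact Hg | exact Hdg |].
  - intro s. apply has_deriv4_of_blocks.
    + exact (has_vderiv_scale a u s _ _ (Ha s) (Hdu s)).
    + exact (has_vderiv_scale_const c _ s _ (has_vderiv_conj u s _ (Hdu s))).
  - intro s. apply inner4_psi_deriv.
    + apply psi_coef_normsq.
    + unfold c, RtoC, Cre, Cim; simpl; rewrite <- inv_sqrt2_sq; ring.
    + now rewrite Hn.
    + exact (Cre_inner2_deriv_unit u s _ Hn (Hdu s)).
Qed.

Lemma C1R_continuity (g : R -> R) : C1R g -> continuity g.
Proof. intros [dg [Hg _]] x; exact (derivable_continuous_pt _ _ (exist _ (dg x) (Hg x))). Qed.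

Lemma Cnorm_polar (l t : R) : 0 <= l -> Cnorm (Cmul (RtoC l) (Cexpi t)) = l.
Proof.
  intro Hl. pose proof (sin2_cos2 t) as Hsc; unfold Rsqr in Hsc.
  unfold Cnorm, Cmul, RtoC, Cexpi, Cre, Cim; simpl.
  transitivity (sqrt (l * l)); [f_equal | exact (sqrt_square l Hl)].
  transitivity (l * l * (sin t * sin t + cos t * cos t)); [ring | rewrite Hsc; ring].
Qed.

Lemma polar_neq0 (l t : R) : 0 < l -> Cmul (RtoC l) (Cexpi t) <> (0, 0).
Proof.
  intros Hl E. pose proof (Cnorm_polar l t (Rlt_le _ _ Hl)) as Hn.
  rewrite E in Hn; unfold Cnorm, Cre, Cim in Hn; simpl in Hn.
  rewrite Rmult_0_l, Rplus_0_l, sqrt_0 in Hn; lra.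
Qed.

Lemma Cnorm_pos (z : Defs.C) : z <> (0, 0) -> 0 < Cnorm z.
Proof.
  destruct z as [x y]; intro Hz; unfold Cnorm, Cre, Cim; simpl; apply sqrt_lt_R0.
  destruct (Req_dec x 0) as [-> |]; [destruct (Req_dec y 0) as [-> |] |]; [congruence | nra | nra].
Qed.

Lemma cos_eq_1_2PI_multiple (x : R) : cos x = 1 -> exists k : Z, x = 2 * IZR k * PI.
Proof.
  intro H. replace x with (2 * (x / 2)) in H by field. rewrite cos_2a_sin in H.
  destruct (sin_eq_0_0 (x / 2)) as [k Hk]; [nra |].
  exists k; lra.
Qed.

Lemma polar_arg_2PI_multiple (l t1 t2 : R) :
  0 < l -> Cmul (RtoC l) (Cexpi t1) = Cmul (RtoC l) (Cexpi t2) ->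
  exists k : Z, t1 - t2 = 2 * IZR k * PI.
Proof.
  intros Hl E. unfold Cmul, RtoC, Cexpi, Cre, Cim in E; simpl in E.
  injection E as Ec Es.
  assert (Hc : cos t1 = cos t2) by (apply (Rmult_eq_reg_l l); lra).
  assert (Hs : sin t1 = sin t2) by (apply (Rmult_eq_reg_l l); lra).
  apply cos_eq_1_2PI_multiple.
  pose proof (sin2_cos2 t2) as Hsc; unfold Rsqr in Hsc.
  rewrite cos_minus, Hc, Hs; lra.
Qed.

(* A jump of [2 k PI] with [k <> 0] would force, by the intermediate value theorem,
   a value at distance exactly [PI] from [h a], which is not in [h a + 2 PI Z]. *)
Lemma continuous_2PIZ_valued_const (h : R -> R) (a b : R) :
  continuity h -> (forall s, exists k : Z, h s = 2 * IZR k * PI) -> a <= b -> h b = h a.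
Proof.
  intros Hc Hk Hab. pose proof PI_RGT_0 as Hpi.
  destruct (Hk a) as [ka Ha], (Hk b) as [kb Hb].
  destruct (Z.eq_dec kb ka) as [-> | Hne]; [lra | exfalso].
  assert (Hn : 1 <= (IZR kb - IZR ka) * (IZR kb - IZR ka)).
  { rewrite <- minus_IZR, <- mult_IZR; apply IZR_le; nia. }
  set (f := fun s => (h s - h a) * (h s - h a) - PI * PI).
  destruct (IVT_cor f a b) as [z [_ Hz]]; [| exact Hab | |].
  - assert (Hd : continuity (fun s => h s - h a)).
    { apply continuity_minus; [exact Hc | apply continuity_const; now intros ? ?]. }
    apply continuity_minus; [exact (continuity_mult _ _ Hd Hd) |].
    apply continuity_const; now intros ? ?.
  - unfold f; rewrite Ha, Hb, Rminus_diag.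
    replace (2 * IZR kb * PI - 2 * IZR ka * PI) with (2 * PI * (IZR kb - IZR ka)) by ring.
    assert (0 <= PI * PI * (4 * ((IZR kb - IZR ka) * (IZR kb - IZR ka)) - 1)) by nra.
    nra.
  - destruct (Hk z) as [kz Hkz]. unfold f in Hz; rewrite Hkz, Ha in Hz.
    assert (Hm : IZR (4 * (kz - ka) * (kz - ka)) = IZR 1).
    { rewrite !mult_IZR, minus_IZR; apply (Rmult_eq_reg_l (PI * PI)); nra. }
    apply eq_IZR in Hm; lia.
Qed.

Lemma is_arg_branch_polar (f : R -> Defs.C) (l g : R -> R) :
  (forall s, 0 <= l s) -> continuity g ->
  (forall s, f s = Cmul (RtoC (l s)) (Cexpi (g s))) -> is_arg_branch f g.
Proof. intros Hl Hg Hf; split; [exact Hg | intro s; rewrite Hf, Cnorm_polar; auto]. Qed.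

Lemma arg_branch_increment_unique (f : R -> Defs.C) (th1 th2 : R -> R) (a b : R) :
  a <= b -> (forall s, f s <> (0, 0)) -> is_arg_branch f th1 -> is_arg_branch f th2 ->
  th1 b - th1 a = th2 b - th2 a.
Proof.
  intros Hab Hf [Hc1 H1] [Hc2 H2].
  enough (th1 b - th2 b = th1 a - th2 a) by lra.
  apply (continuous_2PIZ_valued_const (fun s => th1 s - th2 s)); [| | exact Hab].
  - exact (continuity_minus _ _ Hc1 Hc2).
  - intro s. apply (polar_arg_2PI_multiple (Cnorm (f s))); [exact (Cnorm_pos _ (Hf s)) |].
    now rewrite <- H1, <- H2.
Qed.

Lemma closed_curve_arg_increment (f : R -> Defs.C) (th : R -> R) (L : R) :
  (forall s, f s <> (0, 0)) -> is_arg_branch f th -> f L = f 0 ->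
  exists k : Z, th L - th 0 = 2 * IZR k * PI.
Proof.
  intros Hf [_ Hth] Hcl.
  apply (polar_arg_2PI_multiple (Cnorm (f 0))); [exact (Cnorm_pos _ (Hf 0)) |].
  rewrite <- (Hth 0), <- Hcl; apply eq_sym, Hth.
Qed.

Lemma winding_number_of_branch (f : R -> Defs.C) (th : R -> R) (L : R) :
  0 <= L -> (forall s, f s <> (0, 0)) -> is_arg_branch f th -> f L = f 0 ->
  (exists W : Z, winding_number f L (IZR W)) /\
  (forall w, winding_number f L w -> w = (th L - th 0) / (2 * PI)).
Proof.
  intros HL Hf Hth Hcl. pose proof PI_RGT_0 as Hpi. split.
  - destruct (closed_curve_arg_increment f th L Hf Hth Hcl) as [k Hk].
    exists k; split; [exact Hf |]; exists th; split; [exact Hth |].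
    rewrite Hk; field; lra.
  - intros w [_ [th' [Hth' ->]]].
    now rewrite (arg_branch_increment_unique f th' th 0 L HL Hf Hth' Hth).
Qed.

Theorem mainTheorem2
  (L : R) (A : R -> M2) (lam : nat -> R -> R) (u : nat -> R -> V2)
  (gam : nat -> R -> R) :
  0 < L ->
  C1M2 A ->
  (forall s, A (s + L) = A s) ->
  (forall s, mtrans (A s) = A s) ->
  (forall s, lam 1%nat s > lam 2%nat s /\ lam 2%nat s > 0) ->
  (forall j : nat, (j = 1 \/ j = 2)%nat ->
     C1V2 (u j) /\ (forall s, u j (s + L) = u j s) /\
     (forall s, mvec (mmul (A s) (madj (A s))) (u j s)
                = vscale (RtoC (lam j s ^ 2)) (u j s))) ->
  (forall s, inner2 (u 1%nat s) (u 1%nat s) = RtoC 1 /\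
             inner2 (u 2%nat s) (u 2%nat s) = RtoC 1 /\
             inner2 (u 1%nat s) (u 2%nat s) = RtoC 0) ->
  (forall j : nat, (j = 1 \/ j = 2)%nat ->
     C1R (gam j) /\
     (forall s, bil2 (u j s) (mvec (madj (A s)) (u j s))
                = Cmul (RtoC (lam j s)) (Cexpi (gam j s)))) ->
  forall j : nat, (j = 1 \/ j = 2)%nat -> forall sign : bool,
    let lt := fun s => bil2 (u j s) (mvec (madj (A s)) (u j s)) in
    zak_phase (psi_state sign (gam j) (u j)) L
              (RtoC ((gam j L - gam j 0) / 2)) /\
    (exists W : Z, winding_number lt L (IZR W)) /\
    (forall w, winding_number lt L w -> (gam j L - gam j 0) / 2 = PI * w).
Proof.
  intros HL _ HAper _ Hlam Hu Hn Hgam j Hj sign lt.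
  assert (Hlam_pos : forall s, 0 < lam j s).
  { intro s; destruct (Hlam s); destruct Hj as [-> | ->]; lra. }
  assert (Hunit : forall s, inner2 (u j s) (u j s) = RtoC 1).
  { intro s; destruct (Hn s) as [? [? _]]; destruct Hj as [-> | ->]; assumption. }
  destruct (Hu j Hj) as [HuC1 [Huper _]], (Hgam j Hj) as [HgC1 Hpolar].
  assert (Hbranch : is_arg_branch lt (gam j))
    by exact (is_arg_branch_polar lt (lam j) (gam j) (fun s => Rlt_le _ _ (Hlam_pos s))
                                  (C1R_continuity _ HgC1) Hpolar).
  assert (Hnz : forall s, lt s <> (0, 0)).
  { intro s; unfold lt; rewrite Hpolar; exact (polar_neq0 _ _ (Hlam_pos s)). }
  assert (Hclosed : lt L = lt 0).
  { pose proof (HAper 0) as HA0; pose proof (Huper 0) as Hu0.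
    rewrite Rplus_0_l in HA0, Hu0; unfold lt; now rewrite HA0, Hu0. }
  destruct (winding_number_of_branch lt (gam j) L (Rlt_le _ _ HL) Hnz Hbranch Hclosed)
    as [Hexists Hunique].
  split; [exact (zak_phase_psi_state sign (gam j) (u j) L HgC1 HuC1 Hunit) |].
  split; [exact Hexists |].
  intros w Hw; rewrite (Hunique w Hw); field; exact PI_neq0.
Qed.
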